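(* Let $k$ be a field of characteristic $2$. There exists a nontrivial action of $\mathbb{G}_{m,k}$ on $\mathcal{E}$ by group automorphisms such that the semi-direct product $\mathcal{E}\rtimes\mathbb{G}_{m,k}$ acts faithfully on $\mathbb{P}^1_k$. Moreover, this action can be chosen so that, for every $n\ge0$, it preserves $\mathcal{D}_n$ and $\mathcal{H}_{0,n}$; consequently, for all $n\ge0$ and $l\ge1$, the induced semi-direct products $\mathcal{D}_n\rtimes\mu_{2^l,k}$ and $\mathcal{H}_{0,n}\rtimes\mu_{2^l,k}$ act faithfully on $\mathbb{P}^1_k$.
   Context: Let $\alpha_{2,k}$ act on $\mathbb{G}_{a,k}$ by group automorphisms via $a\cdot b=b+ab^2$ and let $\mathcal{E}=\mathbb{G}_{a,k}\rtimes\alpha_{2,k}$. For $n\ge0$, $\mathcal{D}_n=\alpha_{2^n,k}\rtimes\alpha_{2,k}\subseteq\mathcal{E}$, where $\alpha_{2^n,k}=\operatorname{Spec}k[T]/(T^{2^n})\subseteq\mathbb{G}_{a,k}$, and $\mathcal{H}_{0,n}=\alpha_{2^n,k}\rtimes\{0\}\subseteq\mathcal{D}_n$ (for $n\ge1$). $\mu_{2^l,k}\subseteq\mathbb{G}_{m,k}$ acts by restriction. *)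

(* Group schemes over k are encoded by their functors of
   points on commutative k-algebras. *)
From HB Require Import structures.
From mathcomp Require Import all_boot all_order all_algebra.
Set Implicit Arguments. Unset Strict Implicit. Unset Printing Implicit Defensive.
Import Order.TTheory GRing.Theory Num.Theory.
Local Open Scope ring_scope.

Section GroupSchemes.
Variable k : fieldType.

Definition gm_unit (A : comAlgType k) (u : A) : Prop := exists v : A, u * v = 1.

(* points of E(A) = G_a(A) x alpha_2(A) are pairs (b, a) with a^2 = 0 *)
Definition inE (A : comAlgType k) (x : A * A) : Prop := x.2 ^+ 2 = 0.

Definition inD (n : nat) (A : comAlgType k) (x : A * A) : Prop :=
  x.1 ^+ (2 ^ n) = 0 /\ x.2 ^+ 2 = 0.

Definition inH (n : nat) (A : comAlgType k) (x : A * A) : Prop :=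
  x.1 ^+ (2 ^ n) = 0 /\ x.2 = 0.

Definition in_mu (l : nat) (A : comAlgType k) (u : A) : Prop := u ^+ (2 ^ l) = 1.

(* group law of E = G_a x| alpha_2 with a . b = b + a b^2:
   (b, a) (b', a') = (b + a . b', a + a') *)
Definition E_mul (A : comAlgType k) (x y : A * A) : A * A :=
  (x.1 + (y.1 + x.2 * y.1 ^+ 2), x.2 + y.2).

(* a family of maps G_m(A) x E(A) -> E(A), one for each k-algebra A *)
Definition gm_map := forall A : comAlgType k, A -> A * A -> A * A.

Definition is_Gm_action_by_aut (rho : gm_map) : Prop :=
  [/\ (forall (A B : comAlgType k) (f : {lrmorphism A -> B}) (u : A) (x : A * A),
          gm_unit u -> inE x ->
          rho B (f u) (f x.1, f x.2) = (f (rho A u x).1, f (rho A u x).2)),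
      (forall (A : comAlgType k) (u : A) (x : A * A),
          gm_unit u -> inE x -> inE (rho A u x)),
      (forall (A : comAlgType k) (x : A * A), inE x -> rho A 1 x = x),
      (forall (A : comAlgType k) (u v : A) (x : A * A),
          gm_unit u -> gm_unit v -> inE x -> rho A (u * v) x = rho A u (rho A v x)) &
      (forall (A : comAlgType k) (u : A) (x y : A * A),
          gm_unit u -> inE x -> inE y ->
          rho A u (E_mul x y) = E_mul (rho A u x) (rho A u y))].

Definition nontrivial_action (rho : gm_map) : Prop :=
  exists (A : comAlgType k) (u : A) (x : A * A), [/\ gm_unit u, inE x & rho A u x <> x].

Definition SD_mul (rho : gm_map) (A : comAlgType k) (g h : (A * A) * A) : (A * A) * A :=
  (E_mul g.1 (rho A g.2 h.1), g.2 * h.2).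

Definition SD_map (A B : comAlgType k) (f : {lrmorphism A -> B}) (g : (A * A) * A)
  : (B * B) * B := ((f g.1.1, f g.1.2), f g.2).

(* M and N define the same point of PGL_2(A) = GL_2(A) / A^x *)
Definition proj_eq (A : comAlgType k) (M N : 'M[A]_2) : Prop :=
  exists c : A, gm_unit c /\ M = c *: N.

(* a family of maps from the semidirect product to 2x2 matrices, standing
   for a morphism to PGL_2 = Aut(P^1) *)
Definition pgl_map := forall A : comAlgType k, (A * A) * A -> 'M[A]_2.

(* phi is a faithful action on P^1 (i.e. a monomorphism of group functors
   into PGL_2 = Aut(P^1_k)) of the subgroup functor S of E x|_rho G_m *)
Definition faithful_P1_action (rho : gm_map)
    (S : forall A : comAlgType k, (A * A) * A -> Prop) (phi : pgl_map) : Prop :=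
  [/\ (forall (A : comAlgType k) g, S A g -> exists N : 'M[A]_2, phi A g *m N = 1%:M),
      (forall (A : comAlgType k) g h, S A g -> S A h ->
          proj_eq (phi A (SD_mul rho g h)) (phi A g *m phi A h)),
      (forall (A B : comAlgType k) (f : {lrmorphism A -> B}) g, S A g ->
          proj_eq (map_mx f (phi A g)) (phi B (SD_map f g))) &
      (forall (A : comAlgType k) g h, S A g -> S A h ->
          proj_eq (phi A g) (phi A h) -> g = h)].

Definition S_full (A : comAlgType k) (g : (A * A) * A) : Prop :=
  inE g.1 /\ gm_unit g.2.
Definition S_D (n l : nat) (A : comAlgType k) (g : (A * A) * A) : Prop :=
  inD n g.1 /\ in_mu l g.2.
Definition S_H (n l : nat) (A : comAlgType k) (g : (A * A) * A) : Prop :=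
  inH n g.1 /\ in_mu l g.2.

End GroupSchemes.

(** Let [G_m] act on [E] by [t . (b, a) = (t b, t^-1 a)]; this respects the
    twisted law because [t^-1 a (t b')^2 = t (a b'^2)].  The semi-direct
    product then embeds into [PGL_2] by [((b, a), t) |-> U(b) L(a) D(t)] with
    [U(b)] upper unitriangular, [L(a)] lower unitriangular and [D(t) = diag(t, 1)].
    Conjugation by [D(t)] scales [U] by [t] and [L] by [t^-1], and when
    [a^2 = 0] and [2 = 0] one has [L(a) U(c) = (1 + a c) U(c + a c^2) L(a)], which
    is the law [a . c = c + a c^2] of [E] read projectively.  The embedding is
    injective since the bottom-right entry [1] pins down the scalar. *)

From Pilot Require Import Defs.
From HB Require Import structures.
From mathcomp Require Import all_boot all_order all_algebra.
From mathcomp Require Import ring.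
From Stdlib Require Import ClassicalEpsilon.
Set Implicit Arguments. Unset Strict Implicit. Unset Printing Implicit Defensive.
Import GRing.Theory.
Local Open Scope ring_scope.

Section Units.
Variable k : fieldType.

Definition gm_inv (A : comAlgType k) (u : A) : A :=
  epsilon (inhabits 0) (fun v => u * v = 1).

Lemma gm_invP (A : comAlgType k) (u : A) : gm_unit u -> u * gm_inv u = 1.
Proof. exact: epsilon_spec. Qed.

Lemma gm_inv_eq (A : comAlgType k) (u v : A) : u * v = 1 -> gm_inv u = v.
Proof.
move=> uv1; have uu1 := gm_invP (ex_intro _ v uv1).
by rewrite -[gm_inv u]mul1r -uv1 mulrAC uu1 mul1r.
Qed.

Lemma gm_inv1 (A : comAlgType k) : gm_inv (1 : A) = 1.
Proof. exact/gm_inv_eq/mulr1. Qed.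

Lemma gm_invM (A : comAlgType k) (u v : A) :
  gm_unit u -> gm_unit v -> gm_inv (u * v) = gm_inv u * gm_inv v.
Proof.
move=> /gm_invP uu1 /gm_invP vv1; apply: gm_inv_eq; ring: uu1 vv1.
Qed.

Lemma gm_inv_rmorph (A B : comAlgType k) (f : {lrmorphism A -> B}) (u : A) :
  gm_unit u -> gm_inv (f u) = f (gm_inv u).
Proof. by move=> /gm_invP uu1; apply: gm_inv_eq; rewrite -rmorphM uu1 rmorph1. Qed.

Lemma exists_nontrivial_unit : exists (A : comAlgType k) (u : A), gm_unit u /\ u <> 1.
Proof.
pose h : {poly k} := 'X^2.
pose eps : {poly %/ h} := 'qX.
have eps2 : eps ^+ 2 = 0.
  rewrite /eps /qpolyX -rmorphXn; apply: val_inj; rewrite /= mk_monic_Xn.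
  exact/Pdiv.RingMonic.rmodpp/monicXn.
have eps_neq0 : eps != 0.
  have epsE : val eps = 'X :> {poly k}.
    by apply: qpolyXE; rewrite ?size_polyXn ?monicXn.
  by apply/eqP => /(congr1 val); rewrite epsE => /eqP; rewrite polyX_eq0.
exists {poly %/ h}, (1 + eps); split.
- by exists (1 - eps); ring: eps2.
- by move=> /(congr1 (fun v => v - 1)); rewrite addrC addKr subrr; apply/eqP.
Qed.

End Units.

Section Action.
Variable k : fieldType.

Definition gm_scale (A : comAlgType k) (u : A) (x : A * A) : A * A :=
  (u * x.1, gm_inv u * x.2).

Lemma gm_scale_inD (n : nat) (A : comAlgType k) (u : A) (x : A * A) :
  gm_unit u -> inD n x -> inD n (gm_scale u x).
Proof.
case: x => b a _ [/= bn a2]; split=> /=; first by rewrite exprMn bn mulr0.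
by rewrite exprMn a2 mulr0.
Qed.

Lemma gm_scale_inH (n : nat) (A : comAlgType k) (u : A) (x : A * A) :
  gm_unit u -> inH n x -> inH n (gm_scale u x).
Proof. by case: x => b a _ [/= bn ->]; split; rewrite /= ?exprMn ?bn mulr0. Qed.

Lemma gm_scale_action : is_Gm_action_by_aut (@gm_scale).
Proof.
split=> A.
- move=> B f u [b a] Uu _.
  by rewrite /gm_scale /= gm_inv_rmorph // !rmorphM.
- by move=> u [b a] _; rewrite /Defs.inE /= exprMn => ->; rewrite mulr0.
- by move=> [b a] _; rewrite /gm_scale gm_inv1 !mul1r.
- by move=> u v [b a] Uu Uv _; rewrite /gm_scale /= gm_invM // !mulrA.
- move=> u [b a] [b' a'] /gm_invP uu1 _ _; rewrite /gm_scale /E_mul /=.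
  congr pair; ring: uu1.
Qed.

Lemma gm_scale_nontrivial : nontrivial_action (@gm_scale).
Proof.
have [A [u [Uu u_neq1]]] := exists_nontrivial_unit k.
exists A, u, (1, 0); split=> //; first by rewrite /Defs.inE expr0n.
by move=> /(congr1 fst) /=; rewrite mulr1.
Qed.

End Action.

Section Subgroups.
Variable k : fieldType.

Lemma in_mu_gm_unit (l : nat) (A : comAlgType k) (u : A) : in_mu l u -> gm_unit u.
Proof. by rewrite /in_mu -(prednK (expn_gt0 2 l)) exprS; exists (u ^+ (2 ^ l).-1). Qed.

Lemma inD_inE (n : nat) (A : comAlgType k) (x : A * A) : inD n x -> Defs.inE x.
Proof. by case. Qed.

Lemma inH_inD (n : nat) (A : comAlgType k) (x : A * A) : inH n x -> inD n x.
Proof. by case: x => b a [bn /= ->]; split; rewrite /= ?expr0n. Qed.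

Lemma S_D_full (n l : nat) (A : comAlgType k) (g : (A * A) * A) :
  S_D n l g -> S_full g.
Proof. by case=> /inD_inE Eg /in_mu_gm_unit. Qed.

Lemma S_H_D (n l : nat) (A : comAlgType k) (g : (A * A) * A) :
  S_H n l g -> S_D n l g.
Proof. by case=> /inH_inD. Qed.

End Subgroups.

Local Ltac mx2_ext :=
  apply/matrixP; case=> [[|[|?]] ?] //; case=> [[|[|?]] ?] //;
  rewrite !mxE ?big_ord_recl ?big_ord0 ?mxE /= ?addr0.

Section Matrices.
Variable R : pzRingType.

Definition mx2 (p q r s : R) : 'M[R]_2 :=
  \matrix_(i < 2, j < 2)
    if (i : nat) == 0%N then (if (j : nat) == 0%N then p else q)
    else (if (j : nat) == 0%N then r else s).

Lemma mx2_mul (p q r s p' q' r' s' : R) :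
  mx2 p q r s *m mx2 p' q' r' s' =
  mx2 (p * p' + q * r') (p * q' + q * s') (r * p' + s * r') (r * q' + s * s').
Proof. by mx2_ext. Qed.

Lemma mx2_scale (c p q r s : R) : c *: mx2 p q r s = mx2 (c * p) (c * q) (c * r) (c * s).
Proof. by mx2_ext. Qed.

Lemma mx2_1 : 1%:M = mx2 1 0 0 1.
Proof. by mx2_ext. Qed.

Lemma mx2_inj (p q r s p' q' r' s' : R) :
  mx2 p q r s = mx2 p' q' r' s' -> [/\ p = p', q = q', r = r' & s = s'].
Proof.
move=> /matrixP eq_mx; have := eq_mx 0 0; have := eq_mx 0 1.
by have := eq_mx 1 0; have := eq_mx 1 1; rewrite !mxE.
Qed.

End Matrices.

Lemma map_mx2 (R S : pzRingType) (f : R -> S) (p q r s : R) :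
  map_mx f (mx2 p q r s) = mx2 (f p) (f q) (f r) (f s).
Proof. by mx2_ext. Qed.

Section Embedding.
Variable k : fieldType.

Definition pgl_embed (A : comAlgType k) (g : (A * A) * A) : 'M[A]_2 :=
  let: ((b, a), t) := g in mx2 (t * (1 + a * b)) b (t * a) 1.

Variable A : comAlgType k.

Lemma pgl_embed_invertible (g : (A * A) * A) :
  gm_unit g.2 -> exists N : 'M[A]_2, pgl_embed g *m N = 1%:M.
Proof.
case: g => [[b a] t] /= /gm_invP tt1; set w := gm_inv t in tt1.
exists (mx2 w (- w * b) (- a) (1 + a * b)).
by rewrite mx2_mul mx2_1; congr mx2; ring: tt1.
Qed.

Lemma pgl_embedM (hk : 2%N \in [pchar k]) (g h : (A * A) * A) :
  S_full g -> S_full h ->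
  proj_eq (pgl_embed (SD_mul (@gm_scale k) g h)) (pgl_embed g *m pgl_embed h).
Proof.
have two0 : (2 : A) = 0 by rewrite -(scaler_nat 2 (1 : A)) (pcharf0 hk) scale0r.
case: g h => [[b a] t] [[b' a'] s] [a2 /gm_invP tt1] [a'2 _].
rewrite /Defs.inE /= in a2 a'2 tt1.
exists (1 + t * a * b'); split; first by exists (1 + t * a * b'); ring: a2 two0.
rewrite /SD_mul /gm_scale /E_mul /= mx2_mul mx2_scale; congr mx2; ring: a2 a'2 tt1 two0.
Qed.

Lemma pgl_embed_rmorph (B : comAlgType k) (f : {lrmorphism A -> B}) (g : (A * A) * A) :
  proj_eq (map_mx f (pgl_embed g)) (pgl_embed (SD_map f g)).
Proof.
exists 1; split; first by exists 1; rewrite mulr1.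
by case: g => [[b a] t]; rewrite scale1r map_mx2 /= !(rmorphM, rmorphD, rmorph1).
Qed.

Lemma pgl_embed_inj (g h : (A * A) * A) :
  S_full g -> S_full h -> proj_eq (pgl_embed g) (pgl_embed h) -> g = h.
Proof.
case: g h => [[b a] t] [[b' a'] s] [_ /gm_invP /= tt1] _ [c [_]].
rewrite mx2_scale => /mx2_inj [e11 e12 e21]; rewrite mulr1 => c1; subst c.
rewrite !mul1r in e11 e12 e21; subst b'.
have ets : t = s.
  have -> : t = t * (1 + a * b) - t * a * b by ring.
  by rewrite e11 e21; ring.
subst s; congr (_, _, _).
by rewrite -[a]mul1r -tt1 mulrAC e21 mulrAC tt1 mul1r.
Qed.

End Embedding.

Section Faithful.
Variables (k : fieldType) (rho : gm_map k) (phi : pgl_map k).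

Lemma faithful_P1_actionS (S S' : forall A : comAlgType k, (A * A) * A -> Prop) :
  (forall (A : comAlgType k) g, S A g -> S' A g) ->
  faithful_P1_action rho S' phi -> faithful_P1_action rho S phi.
Proof.
move=> sSS' [phi_inv phiM phi_nat phi_inj]; split=> A.
- by move=> g /sSS'; apply: phi_inv.
- by move=> g h /sSS' Sg /sSS'; apply: phiM.
- by move=> B f g /sSS'; apply: phi_nat.
- by move=> g h /sSS' Sg /sSS'; apply: phi_inj.
Qed.

End Faithful.

Lemma pgl_embed_faithful (k : fieldType) (hk : 2%N \in [pchar k]) :
  faithful_P1_action (@gm_scale k) (@S_full k) (@pgl_embed k).
Proof.
split=> A.
- by move=> g [_]; apply: pgl_embed_invertible.
- exact: pgl_embedM.
- by move=> B f g _; apply: pgl_embed_rmorph.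
- exact: pgl_embed_inj.
Qed.

Theorem mainTheorem10 (k : fieldType) (hk : 2%N \in [pchar k]) :
  exists rho : gm_map k,
    [/\ is_Gm_action_by_aut rho,
        nontrivial_action rho,
        (exists phi : pgl_map k, faithful_P1_action rho (@S_full k) phi),
        ((forall (n : nat) (A : comAlgType k) (u : A) (x : A * A),
            gm_unit u -> inD n x -> inD n (rho A u x)) /\
        (forall (n : nat) (A : comAlgType k) (u : A) (x : A * A),
            (0 < n)%N -> gm_unit u -> inH n x -> inH n (rho A u x))) &
        (forall n l : nat, (0 < l)%N ->
            (exists phi : pgl_map k, faithful_P1_action rho (@S_D k n l) phi) /\
            ((0 < n)%N -> exists phi : pgl_map k, faithful_P1_action rho (@S_H k n l) phi))].
Proof.
have faithful_D n l : faithful_P1_action (@gm_scale k) (@S_D k n l) (@pgl_embed k).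
  exact: faithful_P1_actionS (@S_D_full k n l) (pgl_embed_faithful hk).
exists (@gm_scale k); split.
- exact: gm_scale_action.
- exact: gm_scale_nontrivial.
- by exists (@pgl_embed k); apply: pgl_embed_faithful.
- by split=> n A u x; [apply: gm_scale_inD | move=> _; apply: gm_scale_inH].
- move=> n l _; split; exists (@pgl_embed k) => //.
  exact: faithful_P1_actionS (@S_H_D k n l) (faithful_D n l).
Qed.
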